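(* Let $\tau$ be a type and let $\mathcal F$ be a $2$-capturing construction scheme over $\omega_1$ of type $\tau$. For $\alpha\in\omega_1$ let $f_\alpha:\omega\to\omega$ be $f_\alpha(l)=|(\alpha)_l|$, and let $\mathcal B_{\mathcal F}=\{f_\alpha\}_{\alpha\in\omega_1}$, ordered by $f\le g$ iff $f(n)\le g(n)$ for all $n$. Then $(\mathcal B_{\mathcal F},\le)$ is a sixth Tukey type, i.e. it is a directed partial order of cardinality $\omega_1$ which is not Tukey equivalent to any of $1$, $\omega$, $\omega_1$, $\omega\times\omega_1$, $[\omega_1]^{<\omega}$ (with their natural orders).
   Context: For directed partial orders $D,E$, $E\le_T D$ if there is $\phi:D\to E$ mapping cofinal subsets of $D$ to cofinal subsets of $E$; $E\equiv_T D$ if $E\le_T D$ and $D\le_T E$. A type is a sequence $\tau=\{(m_k,n_{k+1},r_{k+1})\}_{k\in\omega}$ of natural numbers with $m_0=1$; $n_k\ge2$ for $k\ge1$; every $r\in\omega$ equals $r_k$ for infinitely many $k$; $m_k>r_{k+1}$; and $m_{k+1}=r_{k+1}+(m_k-r_{k+1})n_{k+1}$ for all $k$. For a set of ordinals $X$ and $\mathcal F\subseteq[X]^{<\omega}$, $\mathcal F_k$ is the set of elements of rank $k$ in $(\mathcal F,\subsetneq)$; $A\sqsubseteq B$ means $A\subseteq B$ and every element of $B$ below an element of $A$ is in $A$; $A<B$ means every element of $A$ is below every element of $B$. $\mathcal F$ is a construction scheme over $X$ of type $\tau$ if (1) every finite subset of $X$ lies in a member of $\mathcal F$; (2) $|F|=m_k$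 for $F\in\mathcal F_k$; (3) $E\cap F\sqsubseteq E,F$ for $E,F\in\mathcal F_k$; (4) each $F\in\mathcal F_{k+1}$ is the union of uniquely determined $F_0,\dots,F_{n_{k+1}-1}\in\mathcal F_k$ forming a $\Delta$-system with root $R(F)$, $|R(F)|=r_{k+1}$, $R(F)<F_0\setminus R(F)<\dots<F_{n_{k+1}-1}\setminus R(F)$. Let $\rho(\alpha,\beta)=\min\{k:\exists F\in\mathcal F_k\,(\{\alpha,\beta\}\subseteq F)\}$ and $(\alpha)_k=\{\xi\le\alpha:\rho(\xi,\alpha)\le k\}$. For $l\ge1$, $F\in\mathcal F_l$ and finite $\mathcal C\subseteq[\omega_1]^{<\omega}$: $F$ captures $\mathcal C$ if $|\mathcal C|\le n_l$ and $\mathcal C$ can be enumerated as $\{c_i\}_{i<|\mathcal C|}$ with $c_i\subseteq F_i$, $c_i\setminus R(F)\neq\emptyset$ and $\phi_i[c_0]=c_i$ where $\phi_i:F_0\to F_i$ is the increasing bijection. $\mathcal F$ is $2$-capturing if for every uncountable $S\subseteq[\omega_1]^{<\omega}$ and every $k\in\omega$ there are $\mathcal C\in[S]^2$, $l>k$ and $F\in\mathcal F_l$ capturing $\mathcal C$. *)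

(* omega_1 is modelled as an abstract strict well-order (W, lt)
   that is uncountable and all of whose proper initial segments are countable;
   this characterises omega_1 up to isomorphism. *)
From Stdlib Require Import List Arith.
Import ListNotations.

Section Defs.
Context {W : Type} (lt : W -> W -> Prop).

Definition is_omega1 : Prop :=
  well_founded lt /\
  (forall x y z, lt x y -> lt y z -> lt x z) /\
  (forall x y, lt x y \/ x = y \/ lt y x) /\
  ~ (exists f : W -> nat, forall x y, f x = f y -> x = y) /\
  (forall a, exists f : W -> nat,
      forall x y, lt x a -> lt y a -> f x = f y -> x = y).

Definition finite (A : W -> Prop) : Prop :=
  exists l : list W, forall x, A x <-> In x l.

Definition card_is (A : W -> Prop) (n : nat) : Prop :=
  exists l : list W, NoDup l /\ length l = n /\ forall x, A x <-> In x l.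

Definition subset (A B : W -> Prop) : Prop := forall x, A x -> B x.
Definition ssubset (A B : W -> Prop) : Prop := subset A B /\ ~ subset B A.

Definition initial_sub (A B : W -> Prop) : Prop :=
  subset A B /\ forall x y, B x -> A y -> lt x y -> A x.

Definition set_lt (A B : W -> Prop) : Prop :=
  forall x y, A x -> B y -> lt x y.

Definition setI (A B : W -> Prop) : W -> Prop := fun x => A x /\ B x.
Definition setD (A B : W -> Prop) : W -> Prop := fun x => A x /\ ~ B x.

(* Rank in the well-founded poset (Fam, ⊊):
   rank A = max { rank E + 1 : E ∈ Fam, E ⊊ A } (0 if there is no such E). *)
Inductive HasRank (Fam : (W -> Prop) -> Prop) : (W -> Prop) -> nat -> Prop :=
  | HasRank_intro : forall A k,
      Fam A ->
      (forall E, Fam E -> ssubset E A -> exists j, j < k /\ HasRank Fam E j) ->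
      (k = 0 \/ exists E, Fam E /\ ssubset E A /\ HasRank Fam E (pred k)) ->
      HasRank Fam A k.

(* A type tau = {(m_k, n_{k+1}, r_{k+1})}_k, given by sequences m, n, r
   (the values n 0, r 0 are irrelevant). *)
Definition is_type (m n r : nat -> nat) : Prop :=
  m 0 = 1 /\
  (forall k, 1 <= k -> 2 <= n k) /\
  (forall r0 N, exists k, N < k /\ r k = r0) /\
  (forall k, r (S k) < m k) /\
  (forall k, m (S k) = r (S k) + (m k - r (S k)) * n (S k)).

(* F ∈ F_{k+1} is the union of F_0,...,F_{n_{k+1}-1} ∈ F_k, a Delta-system
   with root R, |R| = r_{k+1}, R < F_0 \ R < ... < F_{n_{k+1}-1} \ R. *)
Definition IsDecomp (Fam : (W -> Prop) -> Prop) (n r : nat -> nat) (k : nat)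
    (F : W -> Prop) (Fs : nat -> W -> Prop) (R : W -> Prop) : Prop :=
  (forall i, i < n (S k) -> HasRank Fam (Fs i) k) /\
  (forall x, F x <-> exists i, i < n (S k) /\ Fs i x) /\
  (forall i j, i < j -> j < n (S k) -> forall x, (Fs i x /\ Fs j x) <-> R x) /\
  card_is R (r (S k)) /\
  set_lt R (setD (Fs 0) R) /\
  (forall i, S i < n (S k) -> set_lt (setD (Fs i) R) (setD (Fs (S i)) R)).

Definition construction_scheme (Fam : (W -> Prop) -> Prop) (m n r : nat -> nat)
  : Prop :=
  (forall F, Fam F -> finite F) /\
  (forall A, finite A -> exists F, Fam F /\ subset A F) /\
  (forall k F, HasRank Fam F k -> card_is F (m k)) /\
  (forall k E F, HasRank Fam E k -> HasRank Fam F k ->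
      initial_sub (setI E F) E /\ initial_sub (setI E F) F) /\
  (forall k F, HasRank Fam F (S k) ->
      exists Fs R, IsDecomp Fam n r k F Fs R /\
        forall Gs R', IsDecomp Fam n r k F Gs R' ->
          forall i, i < n (S k) -> forall x, Gs i x <-> Fs i x).

Definition incr_bij (A B : W -> Prop) (phi : W -> W) : Prop :=
  (forall x, A x -> B (phi x)) /\
  (forall x y, A x -> A y -> lt x y -> lt (phi x) (phi y)) /\
  (forall y, B y -> exists x, A x /\ phi x = y).

Definition captures (Fam : (W -> Prop) -> Prop) (n r : nat -> nat) (l : nat)
    (F : W -> Prop) (c : nat -> W -> Prop) (p : nat) : Prop :=
  exists l', l = S l' /\ exists Fs R, IsDecomp Fam n r l' F Fs R /\
    p <= n l /\
    forall i, i < p ->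
      subset (c i) (Fs i) /\
      (exists x, c i x /\ ~ R x) /\
      exists phi, incr_bij (Fs 0) (Fs i) phi /\
        forall y, c i y <-> exists x, c 0 x /\ phi x = y.

Definition set_eq (A B : W -> Prop) : Prop := forall x, A x <-> B x.

(* S ⊆ [W]^{<ω} uncountable (sets identified up to extensional equality) *)
Definition uncountable_family (S : (W -> Prop) -> Prop) : Prop :=
  ~ exists f : (W -> Prop) -> nat,
      forall A B, S A -> S B -> f A = f B -> set_eq A B.

Definition two_capturing (Fam : (W -> Prop) -> Prop) (n r : nat -> nat) : Prop :=
  forall S : (W -> Prop) -> Prop,
    (forall A, S A -> finite A) -> uncountable_family S ->
    forall k, exists a b l F,
      S a /\ S b /\ ~ set_eq a b /\ k < l /\ HasRank Fam F l /\
      captures Fam n r l F (fun i => if i =? 0 then a else b) 2.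

Definition rho_le (Fam : (W -> Prop) -> Prop) (xi alpha : W) (k : nat) : Prop :=
  exists j, j <= k /\ exists F, HasRank Fam F j /\ F xi /\ F alpha.

Definition alpha_k (Fam : (W -> Prop) -> Prop) (alpha : W) (k : nat) : W -> Prop :=
  fun xi => (lt xi alpha \/ xi = alpha) /\ rho_le Fam xi alpha k.

Definition B_F (Fam : (W -> Prop) -> Prop) : (nat -> nat) -> Prop :=
  fun g => exists alpha, forall l, card_is (alpha_k Fam alpha l) (g l).

End Defs.

Definition fun_le (f g : nat -> nat) : Prop := forall k, f k <= g k.

(* Directed orders are given as a carrier predicate D on a type and a relation. *)
Definition cofinal {T : Type} (D : T -> Prop) (le : T -> T -> Prop)
    (X : T -> Prop) : Prop :=
  (forall x, X x -> D x) /\ (forall d, D d -> exists x, X x /\ le d x).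

Definition tukey_le {U T : Type} (E : U -> Prop) (leE : U -> U -> Prop)
    (D : T -> Prop) (leD : T -> T -> Prop) : Prop :=
  exists phi : T -> U, (forall d, D d -> E (phi d)) /\
    forall X, cofinal D leD X -> cofinal E leE (fun u => exists x, X x /\ phi x = u).

Definition tukey_equiv {U T : Type} (E : U -> Prop) (leE : U -> U -> Prop)
    (D : T -> Prop) (leD : T -> T -> Prop) : Prop :=
  tukey_le E leE D leD /\ tukey_le D leD E leE.

Definition directed_po {T : Type} (D : T -> Prop) (le : T -> T -> Prop) : Prop :=
  (forall x, D x -> le x x) /\
  (forall x y z, D x -> D y -> D z -> le x y -> le y z -> le x z) /\
  (forall x y, D x -> D y -> le x y -> le y x -> x = y) /\
  (forall x y, D x -> D y -> exists z, D z /\ le x z /\ le y z).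

Definition one_le : unit -> unit -> Prop := fun _ _ => True.
Definition le_w1 {W : Type} (lt : W -> W -> Prop) (a b : W) : Prop := lt a b \/ a = b.
Definition le_prod {W : Type} (lt : W -> W -> Prop) (p q : nat * W) : Prop :=
  fst p <= fst q /\ le_w1 lt (snd p) (snd q).

(* [f_a(l)] is one more than the position of [a] in any member of [F_l] containing [a].
   So [a |-> f_a] is injective and order-reflecting, the maximum of a member containing [a]
   and [b] bounds [f_a] and [f_b], and the increasing bijection between two members of
   [F_k] preserves [f] at all levels [<= k]; when it comes from capturing, it moves every
   point outside the root upwards.
   If [B_F <=_T omega x omega_1], some uncountable family of [f_a] has all its countable
   subfamilies bounded.  Choose [a < y_a < z_a] with [z_a] in the family and [f_(y_a)] above
   [f_b] for [b <= a] in the family; capturing two triples [{a, y_a, z_a}], [{b, y_b, z_b}]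
   whose [y] and [z] meet at a common rank [c] gives [z_a < b], hence
   [f_(z_a)(c) <= f_(y_b)(c) = f_(y_a)(c) < f_(z_a)(c)].  This also excludes [1], [omega]
   and [omega_1], which are Tukey below [omega x omega_1].
   If [[omega_1]^<omega <=_T B_F], some [f_g] dominates infinitely many members of an
   uncountable family: otherwise capturing two of the finite downsets puts the maximum of
   the first, which is outside the root, into both, hence into the root. *)

From Stdlib Require Import List Arith Lia Cantor.
From Stdlib Require Import Classical ClassicalEpsilon FunctionalExtensionality.
Import ListNotations.

Section FiniteCard.
Context {W : Type}.

Lemma card_unique (A : W -> Prop) a b : card_is A a -> card_is A b -> a = b.
Proof.
  intros [l1 [N1 [L1 E1]]] [l2 [N2 [L2 E2]]]. subst.
  apply Nat.le_antisymm; apply NoDup_incl_length; auto; intros x Hx.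
  - apply E2, E1, Hx.
  - apply E1, E2, Hx.
Qed.

Lemma card_ext (A B : W -> Prop) a : set_eq A B -> card_is A a -> card_is B a.
Proof.
  intros E [l [N [L H]]]. exists l. split; [|split]; auto.
  intro x. rewrite <- (E x). apply H.
Qed.

Lemma card_le (A B : W -> Prop) a b :
  card_is A a -> card_is B b -> subset A B -> a <= b.
Proof.
  intros [l1 [N1 [L1 E1]]] [l2 [N2 [L2 E2]]] S. subst.
  apply NoDup_incl_length; auto. intros x Hx. apply E2, S, E1, Hx.
Qed.

Lemma card_lt (A B : W -> Prop) a b x :
  card_is A a -> card_is B b -> subset A B -> B x -> ~ A x -> a < b.
Proof.
  intros [l1 [N1 [L1 E1]]] [l2 [N2 [L2 E2]]] S Bx nAx. subst.
  apply (NoDup_incl_length (l := x :: l1)).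
  - constructor; auto. intro H. apply nAx, E1, H.
  - intros y [<-|Hy]; apply E2; auto. apply S, E1, Hy.
Qed.

Lemma card_sub_exists (A B : W -> Prop) b :
  card_is B b -> subset A B -> exists a, card_is A a.
Proof.
  intros [l [N [L E]]] S.
  set (keep := fun x => if excluded_middle_informative (A x) then true else false).
  exists (length (filter keep l)), (filter keep l).
  split; [apply NoDup_filter, N|split; [reflexivity|]].
  intro x. rewrite filter_In, <- E. unfold keep.
  destruct (excluded_middle_informative (A x)); split; try tauto.
  - intros _. split; auto.
  - intros [_ F]. discriminate.
Qed.

Lemma finite_sub (A B : W -> Prop) : finite B -> subset A B -> finite A.
Proof.
  intros [l E] S.
  exists (filter (fun x => if excluded_middle_informative (A x) then true else false) l).
  intro x. rewrite filter_In, <- E.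
  destruct (excluded_middle_informative (A x)); split; try tauto.
  - intros _. split; auto.
  - intros [_ F]. discriminate.
Qed.

Lemma card_union (A B : W -> Prop) a b :
  card_is A a -> card_is B b -> (forall x, A x -> B x -> False) ->
  card_is (fun x => A x \/ B x) (a + b).
Proof.
  intros [l1 [N1 [L1 E1]]] [l2 [N2 [L2 E2]]] D. exists (l1 ++ l2).
  split; [|split].
  - apply NoDup_app; auto. intros x H1 H2. apply (D x); [apply E1|apply E2]; auto.
  - rewrite length_app. lia.
  - intro x. rewrite in_app_iff, E1, E2. tauto.
Qed.

Lemma card_single (x : W) : card_is (fun y => y = x) 1.
Proof.
  exists [x]. split; [repeat constructor; simpl; tauto|split; [reflexivity|]].
  intro y; simpl; intuition.
Qed.

Lemma card_empty (A : W -> Prop) : (forall x, ~ A x) -> card_is A 0.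
Proof.
  intro H. exists []. split; [constructor|split; [reflexivity|]].
  intro x; simpl; split; [apply H|tauto].
Qed.

Lemma card_pos (A : W -> Prop) a : card_is A a -> 0 < a -> exists x, A x.
Proof.
  intros [[|x l] [_ [L E]]] P; simpl in L; [lia|].
  exists x. apply E. left; reflexivity.
Qed.

Lemma card_injective_image (P : W -> Prop) (f : W -> W) p : card_is P p ->
  (forall x y, P x -> P y -> f x = f y -> x = y) ->
  card_is (fun z => exists w, P w /\ f w = z) p.
Proof.
  intros (l & N & L & E) Hi. exists (map f l). split; [|split].
  - assert (Hl : forall x, In x l -> P x) by (intros; apply E; auto).
    clear E L. induction l as [|a l IHl]; simpl; constructor; inversion N; subst.
    + intros (w & Hw & Iw)%in_map_iff.
      assert (w = a) as -> by (apply Hi; auto; apply Hl; simpl; auto). auto.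
    + apply IHl; auto. intros; apply Hl; simpl; auto.
  - rewrite length_map; auto.
  - intro z. rewrite in_map_iff. split.
    + intros (w & Pw & <-). exists w; split; auto. apply E; auto.
    + intros (w & <- & Iw). exists w; split; auto. apply E; auto.
Qed.

Definition cardf (A : W -> Prop) : nat := epsilon (inhabits 0) (card_is A).

Lemma cardf_spec (A : W -> Prop) k : card_is A k -> cardf A = k.
Proof.
  intro H. exact (card_unique A _ _ (epsilon_spec (inhabits 0) (card_is A) (ex_intro _ k H)) H).
Qed.

End FiniteCard.

Definition countable {W : Type} (Q : W -> Prop) : Prop :=
  exists g : W -> nat, forall x y, Q x -> Q y -> g x = g y -> x = y.

Lemma countable_sub {W : Type} (Q Q' : W -> Prop) :
  countable Q -> subset Q' Q -> countable Q'.
Proof. intros [g Hg] S. exists g. intros; apply Hg; auto. Qed.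

Lemma uncountable_pigeonhole {W : Type} (Q : W -> Prop) (P : nat -> W -> Prop) :
  ~ countable Q -> (forall w, Q w -> exists k, P k w) ->
  exists k, ~ countable (fun w => Q w /\ P k w).
Proof.
  intros HQ HP. apply NNPP. intro H.
  assert (Hk : forall k, countable (fun w => Q w /\ P k w)).
  { intro k. apply NNPP. intro H'. apply H. eauto. }
  destruct (choice _ Hk) as [gs Hgs].
  assert (HP' : forall w, exists k, Q w -> P k w).
  { intro w. destruct (classic (Q w)) as [q|q]; [destruct (HP w q); eauto|exists 0; tauto]. }
  destruct (choice _ HP') as [ks Hks].
  apply HQ. exists (fun w => Cantor.to_nat (ks w, gs (ks w) w)).
  intros u v Qu Qv [= E1 E2]%Cantor.to_nat_inj.
  rewrite E1 in E2. apply (Hgs (ks v)); auto. rewrite <- E1. auto.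
Qed.

Section Omega1.
Context {W : Type} (lt : W -> W -> Prop) (Hom : is_omega1 lt).

Lemma w1_lt_wf : well_founded lt.
Proof. apply Hom. Qed.

Lemma w1_lt_trans x y z : lt x y -> lt y z -> lt x z.
Proof. apply Hom. Qed.

Lemma w1_lt_total x y : lt x y \/ x = y \/ lt y x.
Proof. apply Hom. Qed.

Lemma w1_lt_irrefl x : ~ lt x x.
Proof. induction (w1_lt_wf x) as [x _ IH]. intro H. exact (IH x H H). Qed.

Lemma w1_lt_asym x y : lt x y -> lt y x -> False.
Proof. intros. apply (w1_lt_irrefl x). eapply w1_lt_trans; eauto. Qed.

Lemma w1_le_lt_trans x y z : le_w1 lt x y -> lt y z -> lt x z.
Proof. intros [H| ->] H2; auto. eapply w1_lt_trans; eauto. Qed.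

Lemma w1_lt_le_trans x y z : lt x y -> le_w1 lt y z -> lt x z.
Proof. intros H [H2| <-]; auto. eapply w1_lt_trans; eauto. Qed.

Lemma w1_le_trans x y z : le_w1 lt x y -> le_w1 lt y z -> le_w1 lt x z.
Proof. intros [H| ->] H2; auto. left. eapply w1_lt_le_trans; eauto. Qed.

Lemma w1_le_antisym x y : le_w1 lt x y -> le_w1 lt y x -> x = y.
Proof. intros [H| ->] [H2|E]; auto. exfalso; eapply w1_lt_asym; eauto. Qed.

Lemma w1_not_lt_le x y : ~ lt x y -> le_w1 lt y x.
Proof. intro H. destruct (w1_lt_total x y) as [h|[h|h]]; [tauto|right|left]; auto. Qed.

Lemma w1_le_not_lt x y : le_w1 lt x y -> ~ lt y x.
Proof. intros [H| ->] H2; [eapply w1_lt_asym|eapply w1_lt_irrefl]; eauto. Qed.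

Lemma omega1_uncountable : ~ countable (fun _ : W => True).
Proof.
  intros [g Hg]. destruct Hom as (_ & _ & _ & H & _). apply H. exists g. auto.
Qed.

Lemma omega1_inhabited : inhabited W.
Proof.
  apply NNPP. intro H. apply omega1_uncountable. exists (fun _ => 0).
  intros x. exfalso. exact (H (inhabits x)).
Qed.

Lemma countable_seg w : countable (fun x => le_w1 lt x w).
Proof.
  destruct Hom as (_ & _ & _ & _ & H). destruct (H w) as [g Hg].
  exists (fun x => if excluded_middle_informative (x = w) then 0 else S (g x)).
  intros x y Hx Hy.
  destruct (excluded_middle_informative (x = w)), (excluded_middle_informative (y = w));
    try congruence.
  intro E. injection E. destruct Hx, Hy; try congruence. auto.
Qed.

Lemma uncountable_unbounded (Q : W -> Prop) :
  ~ countable Q -> forall w, exists x, Q x /\ lt w x.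
Proof.
  intros H w. apply NNPP. intro H'. apply H. apply (countable_sub _ _ (countable_seg w)).
  intros x Qx. apply w1_not_lt_le. intro l. apply H'. eauto.
Qed.

Lemma exists_gt w : exists w', lt w w'.
Proof.
  destruct (uncountable_unbounded _ omega1_uncountable w) as [x [_ H]]. eauto.
Qed.

(* Otherwise [W] is the union of the countably many countable segments below the [h x]. *)
Lemma countable_bounded (C : W -> Prop) (h : W -> W) :
  countable C -> exists d, forall x, C x -> le_w1 lt (h x) d.
Proof.
  intros [g Hg]. apply NNPP. intro H.
  assert (H1 : forall d, exists x, C x /\ lt d (h x)).
  { intro d. apply NNPP. intro H2. apply H. exists d. intros x Cx.
    apply w1_not_lt_le. intro l. apply H2. eauto. }
  destruct (choice _ H1) as [xs Hxs].
  destruct Hom as (_ & _ & _ & _ & Hseg).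
  destruct (choice _ Hseg) as [e He].
  apply omega1_uncountable.
  exists (fun w => Cantor.to_nat (g (xs w), e (h (xs w)) w)).
  intros u v _ _ [= E1 E2]%Cantor.to_nat_inj.
  destruct (Hxs u) as [Cu Lu], (Hxs v) as [Cv Lv].
  assert (E : xs u = xs v) by (apply Hg; auto).
  rewrite E in E2, Lu. eapply He; eauto.
Qed.

Lemma range_uncountable (ax : W -> W) (L : W -> list W) :
  (forall x, In x (L (ax x))) -> ~ countable (fun a => exists x, ax x = a).
Proof.
  intros HL [g Hg].
  assert (Hi : forall w, exists i, nth_error (L (ax w)) i = Some w).
  { intro w. apply In_nth_error, HL. }
  destruct (choice _ Hi) as [iw Hiw].
  apply omega1_uncountable.
  exists (fun w => Cantor.to_nat (g (ax w), iw w)).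
  intros u v _ _ [= E1 E2]%Cantor.to_nat_inj.
  assert (E3 : ax u = ax v) by (apply Hg; eauto).
  pose proof (Hiw u) as Hu. pose proof (Hiw v) as Hv.
  rewrite E3, E2, Hv in Hu. injection Hu; auto.
Qed.

Lemma uncountable_avoid2 (x y : W) : ~ countable (fun z => z <> x /\ z <> y).
Proof.
  intros [g Hg]. apply omega1_uncountable.
  exists (fun z => if excluded_middle_informative (z = x) then 0
           else if excluded_middle_informative (z = y) then 1 else S (S (g z))).
  intros u v _ _.
  destruct (excluded_middle_informative (u = x)), (excluded_middle_informative (v = x)),
    (excluded_middle_informative (u = y)), (excluded_middle_informative (v = y));
    try congruence.
  intro E. injection E. apply Hg; auto.
Qed.

Lemma list_has_max (l : list W) x0 :
  In x0 l -> exists g, In g l /\ forall y, In y l -> le_w1 lt y g.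
Proof.
  revert x0; induction l as [|a l IH]; intros x0 H; [destruct H|].
  destruct l as [|b l'].
  - exists a. split; [left; auto|]. intros y [<-|[]]. right; auto.
  - destruct (IH b (or_introl eq_refl)) as (g & Hg & Hmax).
    destruct (w1_lt_total a g) as [h|[<-|h]].
    + exists g. split; [right; auto|]. intros y [<-|Hy]; [left|]; auto.
    + exists a. split; [left; auto|]. intros y [<-|Hy]; [right|]; auto.
    + exists a. split; [left; auto|]. intros y [<-|Hy]; [right; auto|].
      left. eapply w1_le_lt_trans; eauto.
Qed.

Section IncreasingBijection.
Variables (A B : W -> Prop) (phi : W -> W).
Hypothesis Hb : incr_bij lt A B phi.

Lemma incr_bij_inj x y : A x -> A y -> phi x = phi y -> x = y.
Proof.
  destruct Hb as (_ & Hi & _). intros Ax Ay E.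
  destruct (w1_lt_total x y) as [h|[h|h]]; auto; exfalso;
    [pose proof (Hi x y Ax Ay h)|pose proof (Hi y x Ay Ax h)];
    rewrite E in *; eapply w1_lt_irrefl; eauto.
Qed.

Lemma incr_bij_reflect_lt x y : A x -> A y -> lt (phi x) (phi y) -> lt x y.
Proof.
  destruct Hb as (_ & Hi & _). intros Ax Ay h.
  destruct (w1_lt_total x y) as [h'|[<-|h']]; auto; exfalso.
  - eapply w1_lt_irrefl; eauto.
  - exact (w1_lt_asym _ _ h (Hi y x Ay Ax h')).
Qed.

Section Image.
Variables (a b : W -> Prop).
Hypothesis Ha : subset a A.
Hypothesis Himg : forall y, b y <-> exists x, a x /\ phi x = y.

Lemma incr_bij_image_le x y : a x -> a y -> le_w1 lt x y -> le_w1 lt (phi x) (phi y).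
Proof. destruct Hb as (_ & Hi & _). intros ax ay [h| ->]; [left|right]; auto. Qed.

Lemma incr_bij_max g h :
  a g -> (forall z, a z -> le_w1 lt z g) -> b h -> (forall z, b z -> le_w1 lt z h) ->
  phi g = h.
Proof.
  intros ag Hg bh Hh. apply w1_le_antisym.
  - apply Hh, Himg. eauto.
  - destruct (proj1 (Himg h) bh) as (x & ax & <-).
    apply incr_bij_image_le; auto.
Qed.

Lemma incr_bij_min g h :
  a g -> (forall z, a z -> le_w1 lt g z) -> b h -> (forall z, b z -> le_w1 lt h z) ->
  phi g = h.
Proof.
  intros ag Hg bh Hh. apply w1_le_antisym.
  - destruct (proj1 (Himg h) bh) as (x & ax & <-).
    apply incr_bij_image_le; auto.
  - apply Hh, Himg. eauto.
Qed.

End Image.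
End IncreasingBijection.

Definition trip (x y z : W) : W -> Prop := fun w => w = x \/ w = y \/ w = z.

Lemma trip_min x y z w : lt x y -> lt y z -> trip x y z w -> le_w1 lt x w.
Proof.
  intros xy yz [-> | [-> | ->]]; [right|left|left]; auto. eapply w1_lt_trans; eauto.
Qed.

Lemma trip_max x y z w : lt x y -> lt y z -> trip x y z w -> le_w1 lt w z.
Proof.
  intros xy yz [-> | [-> | ->]]; [left|left|right]; auto. eapply w1_lt_trans; eauto.
Qed.

Lemma incr_bij_sorted_triple A B phi v yv xv w yw xw :
  incr_bij lt A B phi -> subset (trip v yv xv) A ->
  (forall y, trip w yw xw y <-> exists x, trip v yv xv x /\ phi x = y) ->
  lt v yv -> lt yv xv -> lt w yw -> lt yw xw ->
  phi v = w /\ phi yv = yw.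
Proof.
  intros Hb Hs Himg l1 l2 m1 m2.
  assert (Hmin : phi v = w).
  { apply (incr_bij_min A B phi Hb _ _ Hs Himg).
    - left; auto.
    - intro; apply trip_min; auto.
    - left; auto.
    - intro; apply trip_min; auto. }
  assert (Hmax : phi xv = xw).
  { apply (incr_bij_max A B phi Hb _ _ Hs Himg).
    - right; right; auto.
    - intro; apply trip_max; auto.
    - right; right; auto.
    - intro; apply trip_max; auto. }
  split; auto.
  destruct Hb as (_ & Hi & _).
  assert (h1 : lt w (phi yv)) by (rewrite <- Hmin; apply Hi; auto; apply Hs; unfold trip; auto).
  assert (h2 : lt (phi yv) xw) by (rewrite <- Hmax; apply Hi; auto; apply Hs; unfold trip; auto).
  assert (Hy : trip w yw xw (phi yv)) by (apply Himg; exists yv; unfold trip; auto).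
  destruct Hy as [E | [E | E]]; auto; rewrite E in *.
  - destruct (w1_lt_irrefl _ h1).
  - destruct (w1_lt_irrefl _ h2).
Qed.

End Omega1.

Section Tukey.
Context {U T S : Type}.

Lemma tukey_map_eventually_above (E : U -> Prop) (leE : U -> U -> Prop)
    (D : T -> Prop) (leD : T -> T -> Prop) (phi : T -> U) :
  (forall X, cofinal D leD X -> cofinal E leE (fun u => exists x, X x /\ phi x = u)) ->
  forall e, E e -> exists d0, D d0 /\ forall d, D d -> leD d0 d -> leE e (phi d).
Proof.
  intros Hc e Ee. apply NNPP. intro Hn.
  set (X := fun d => D d /\ ~ leE e (phi d)).
  assert (HX : cofinal D leD X).
  { split; [intros x [h _]; auto|].
    intros d0 Dd0. apply NNPP. intro H. apply Hn. exists d0. split; auto.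
    intros d Dd h. apply NNPP. intro h'. apply H. exists d. repeat split; auto. }
  destruct (proj2 (Hc X HX) e Ee) as (u & (x & [_ Hx] & <-) & Hle). auto.
Qed.

Lemma tukey_le_trans (E : U -> Prop) (leE : U -> U -> Prop) (D : T -> Prop)
    (leD : T -> T -> Prop) (C : S -> Prop) (leC : S -> S -> Prop) :
  tukey_le E leE D leD -> tukey_le D leD C leC -> tukey_le E leE C leC.
Proof.
  intros [phi [Hphi Hcphi]] [psi [Hpsi Hcpsi]].
  exists (fun c => phi (psi c)). split; [auto|].
  intros X HX. destruct (Hcphi _ (Hcpsi X HX)) as [_ Hcof].
  split.
  - intros u (x & Xx & <-). apply Hphi, Hpsi, HX, Xx.
  - intros e Ee. destruct (Hcof e Ee) as (u & (d & (x & Xx & <-) & <-) & Hle). eauto.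
Qed.

Lemma tukey_le_of_monotone (E : U -> Prop) (leE : U -> U -> Prop)
    (D : T -> Prop) (leD : T -> T -> Prop) (f : T -> U) :
  (forall x y z, leE x y -> leE y z -> leE x z) ->
  (forall d, D d -> E (f d)) ->
  (forall d d', D d -> D d' -> leD d d' -> leE (f d) (f d')) ->
  (forall e, E e -> exists d, D d /\ leE e (f d)) ->
  tukey_le E leE D leD.
Proof.
  intros Htr Hf Hmono Hsurj. exists f. split; [auto|].
  intros X [HXD HX]. split.
  - intros u (x & Xx & <-). auto.
  - intros e Ee. destruct (Hsurj e Ee) as (d & Dd & Hed).
    destruct (HX d Dd) as (x & Xx & Hdx).
    exists (f x). split; eauto.
Qed.

End Tukey.

Lemma tukey_le_unit_nat :
  tukey_le (fun _ : unit => True) one_le (fun _ : nat => True) le.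
Proof.
  apply (tukey_le_of_monotone _ _ _ _ (fun _ => tt)); unfold one_le; auto.
  intros e _. exists 0. auto.
Qed.

Lemma tukey_le_nat_prod {W : Type} (lt : W -> W -> Prop) (w0 : W) :
  tukey_le (fun _ : nat => True) le (fun _ : nat * W => True) (le_prod lt).
Proof.
  apply (tukey_le_of_monotone _ _ _ _ fst); [intros; lia|auto| |].
  - intros d d' _ _ [H _]. exact H.
  - intros e _. exists (e, w0). auto.
Qed.

Lemma tukey_le_w1_prod {W : Type} (lt : W -> W -> Prop) :
  is_omega1 lt ->
  tukey_le (fun _ : W => True) (le_w1 lt) (fun _ : nat * W => True) (le_prod lt).
Proof.
  intro Hom. apply (tukey_le_of_monotone _ _ _ _ snd); auto.
  - apply (w1_le_trans lt Hom).
  - intros d d' _ _ [_ H]. exact H.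
  - intros e _. exists (0, e). split; [auto|right; auto].
Qed.

Definition position_in_component (r0 mk p : nat) : nat :=
  if p <? r0 then p else r0 + (p - r0) mod (mk - r0).

Section Scheme.
Context {W : Type} (lt : W -> W -> Prop) (Fam : (W -> Prop) -> Prop) (m n r : nat -> nat).
Hypothesis Hom : is_omega1 lt.
Hypothesis Hty : is_type m n r.
Hypothesis Hcs : construction_scheme lt Fam m n r.
Hypothesis H2c : two_capturing lt Fam n r.

Local Notation level := (HasRank Fam).
Local Notation decomp := (IsDecomp lt Fam n r).

Definition below (X : W -> Prop) (x : W) : W -> Prop := fun z => X z /\ lt z x.

Lemma level_card F k : level F k -> card_is F (m k).
Proof. apply Hcs. Qed.

Lemma level_decomp F k : level F (S k) -> exists Fs R, decomp k F Fs R.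
Proof.
  intro H. destruct Hcs as (_ & _ & _ & _ & Hd).
  destruct (Hd k F H) as (Fs & R & D & _). eauto.
Qed.

Lemma two_le_n k : 2 <= n (S k).
Proof. destruct Hty as (_ & H & _). apply H. lia. Qed.

Lemma r_lt_m k : r (S k) < m k.
Proof. destruct Hty as (_ & _ & _ & H & _). apply H. Qed.

Lemma level_lower_closed E H j a b :
  level E j -> level H j -> E a -> E b -> H b -> le_w1 lt a b -> H a.
Proof.
  intros HE HH Ea Eb Hb [ab| ->]; auto.
  destruct Hcs as (_ & _ & _ & Hcoh & _).
  destruct (Hcoh j E H HE HH) as [[_ I] _].
  exact (proj2 (I a b Ea (conj Eb Hb) ab)).
Qed.

Lemma level_descend k : forall X x j, level X k -> X x -> j <= k ->
  exists H, level H j /\ H x /\ subset H X.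
Proof.
  induction k as [|k IH]; intros X x j HX Xx Hj.
  - assert (j = 0) as -> by lia. exists X. split; [|split]; auto. exact (fun z h => h).
  - destruct (Nat.eq_dec j (S k)) as [->|Hne].
    { exists X. split; [|split]; auto. exact (fun z h => h). }
    destruct (level_decomp _ _ HX) as (Fs & R & D1 & D2 & _).
    destruct (proj1 (D2 x) Xx) as (i & Hi & Hix).
    destruct (IH (Fs i) x j (D1 i Hi) Hix ltac:(lia)) as (H & H1 & H2 & H3).
    exists H. split; [|split]; auto. intros z Hz. apply D2. eauto.
Qed.

Section Decomposition.
Variables (k : nat) (X : W -> Prop) (Fs : nat -> W -> Prop) (R : W -> Prop).
Hypothesis D : decomp k X Fs R.

Local Notation N := (n (S k)).
Local Notation d := (m k - r (S k)).

Lemma root_card : card_is R (r (S k)).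
Proof. apply D. Qed.

Lemma comp_level i : i < N -> level (Fs i) k.
Proof. apply D. Qed.

Lemma comp_card i : i < N -> card_is (Fs i) (m k).
Proof. intro h. apply level_card, comp_level, h. Qed.

Lemma comp_sub i y : i < N -> Fs i y -> X y.
Proof. intros h Hy. apply D. eauto. Qed.

Lemma decomp_cover y : X y -> exists i, i < N /\ Fs i y.
Proof. apply D. Qed.

Lemma root_sub_comp i y : i < N -> R y -> Fs i y.
Proof.
  intros h Ry. pose proof (two_le_n k). destruct D as (_ & _ & D3 & _).
  destruct i as [|i].
  - apply (D3 0 1 ltac:(lia) ltac:(lia) y). auto.
  - apply (D3 0 (S i) ltac:(lia) h y). auto.
Qed.

Lemma comp_inter_root i j y : i < N -> j < N -> i <> j -> Fs i y -> Fs j y -> R y.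
Proof.
  intros hi hj ne H1 H2. destruct D as (_ & _ & D3 & _).
  destruct (Nat.lt_gt_cases i j) as [[h|h] _]; auto.
  - apply (D3 i j h hj y). auto.
  - apply (D3 j i h hi y). auto.
Qed.

Lemma comp_diff_card i : i < N -> card_is (setD (Fs i) R) d.
Proof.
  intro h. destruct (card_sub_exists (setD (Fs i) R) (Fs i) (m k) (comp_card i h)) as [c Hc].
  { intros y [Hy _]; auto. }
  assert (E : card_is (Fs i) (r (S k) + c)).
  { eapply card_ext; [|apply card_union; [apply root_card|exact Hc|]].
    - intro y. split.
      + intros [Ry|[Hy _]]; auto. apply (root_sub_comp i); auto.
      + intro Hy. destruct (classic (R y)); [left|right; split]; auto.
    - intros y Ry [_ nRy]; auto. }
  pose proof (card_unique _ _ _ E (comp_card i h)).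
  replace (m k - r (S k)) with c by lia. auto.
Qed.

Lemma comp_diff_nonempty i : i < N -> exists y, Fs i y /\ ~ R y.
Proof.
  intro h. pose proof (r_lt_m k).
  destruct (card_pos _ _ (comp_diff_card i h) ltac:(lia)) as [y Hy]. eauto.
Qed.

Lemma comp_diff_increasing i j : i < j -> j < N ->
  set_lt lt (setD (Fs i) R) (setD (Fs j) R).
Proof.
  intros h1 h2. induction j as [|j IH]; [lia|].
  destruct D as (_ & _ & _ & _ & _ & D6).
  destruct (Nat.eq_dec i j) as [->|ne]; [apply D6; auto|].
  intros a b Ha Hb. destruct (comp_diff_nonempty j ltac:(lia)) as [c Hc].
  apply (w1_lt_trans lt Hom a c b).
  - apply (IH ltac:(lia) ltac:(lia) a c Ha Hc).
  - apply (D6 j h2 c b Hc Hb).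
Qed.

Lemma root_lt_comp_diff i : i < N -> set_lt lt R (setD (Fs i) R).
Proof.
  intros h. destruct D as (_ & _ & _ & _ & D5 & _).
  destruct i as [|i]; auto.
  intros a b Ha Hb. destruct (comp_diff_nonempty 0 ltac:(lia)) as [c Hc].
  apply (w1_lt_trans lt Hom a c b).
  - apply (D5 a c Ha Hc).
  - apply (comp_diff_increasing 0 (S i) ltac:(lia) h c b Hc Hb).
Qed.

Lemma root_initial i y z : i < N -> Fs i y -> R z -> lt y z -> R y.
Proof.
  intros h Hy Rz yz. apply NNPP. intro nRy.
  exact (w1_lt_asym lt Hom _ _ yz (root_lt_comp_diff i h z y Rz (conj Hy nRy))).
Qed.

Lemma max_not_in_root (c : W -> Prop) g :
  subset c (Fs 0) -> (exists x, c x /\ ~ R x) -> c g ->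
  (forall z, c z -> le_w1 lt z g) -> ~ R g.
Proof.
  intros Hc (x & cx & nRx) cg Hmax Rg. apply nRx.
  pose proof (two_le_n k).
  destruct (Hmax x cx) as [h| ->]; auto.
  apply (root_initial 0 x g); auto; lia.
Qed.

Lemma comp_diff_union_card t : t <= N ->
  card_is (fun y => exists i, i < t /\ Fs i y /\ ~ R y) (t * d).
Proof.
  induction t as [|t IH]; intro h.
  - apply card_empty. intros y (i & hi & _). lia.
  - replace (S t * d) with (t * d + d) by lia.
    eapply card_ext; [|apply card_union; [apply IH; lia|apply (comp_diff_card t); lia|]].
    + intro y. split.
      * intros [(i & hi & H)|[H1 H2]]; [exists i; split; [lia|auto]|exists t; auto].
      * intros (i & hi & H). destruct (Nat.eq_dec i t) as [->|ne]; [right; apply H|].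
        left. exists i. split; [lia|auto].
    + intros y (i & hi & H1 & H2) [H3 _]. apply H2.
      apply (comp_inter_root i t y); auto; lia.
Qed.

Lemma below_root x : R x -> set_eq (below X x) (below (Fs 0) x).
Proof.
  intros Rx y. pose proof (two_le_n k). split.
  - intros [Xy yx]. split; auto. destruct (decomp_cover y Xy) as (i & hi & Hy).
    apply root_sub_comp; [lia|]. eapply root_initial; eauto.
  - intros [Hy yx]. split; auto. apply (comp_sub 0); [lia|auto].
Qed.

Section NonRoot.
Variables (t : nat) (x : W) (q : nat).
Hypotheses (ht : t < N) (Hx : Fs t x) (nRx : ~ R x).
Hypothesis Hq : card_is (below (setD (Fs t) R) x) q.

Lemma below_comp_card : card_is (below (Fs t) x) (r (S k) + q).
Proof.
  eapply card_ext; [|apply card_union; [apply root_card|exact Hq|]].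
  - intro y. split.
    + intros [Ry|[[Hy _] yx]]; [|split; auto]. split; [apply root_sub_comp; auto|].
      apply (root_lt_comp_diff t ht); auto. split; auto.
    + intros [Hy yx]. destruct (classic (R y)); [left|right; split; [split|]]; auto.
  - intros y Ry [[_ h] _]; auto.
Qed.

Lemma below_decomp_card : card_is (below X x) (r (S k) + t * d + q).
Proof.
  pose proof (two_le_n k).
  eapply card_ext; [|apply card_union;
    [apply card_union; [apply root_card|apply (comp_diff_union_card t); lia|]|exact Hq|]].
  - intro y. split.
    + intros [[Ry|(i & hi & Hy & nRy)]|[[Hy nRy] yx]].
      * split; [apply (comp_sub 0); [lia|apply root_sub_comp; auto; lia]|].
        apply (root_lt_comp_diff t ht); auto. split; auto.
      * split; [apply (comp_sub i); auto; lia|].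
        apply (comp_diff_increasing i t); auto; split; auto.
      * split; auto. apply (comp_sub t); auto.
    + intros [Xy yx]. destruct (classic (R y)) as [Ry|nRy]; [left; left; auto|].
      destruct (decomp_cover y Xy) as (i & hi & Hy).
      destruct (lt_eq_lt_dec i t) as [[h| ->]|h].
      * left; right. exists i. auto.
      * right. split; [split|]; auto.
      * exfalso. apply (w1_lt_asym lt Hom x y); auto.
        apply (comp_diff_increasing t i h hi x y); split; auto.
  - intros y Ry (i & hi & Hy & nRy); auto.
  - intros y [Ry|(i & hi & Hy & nRy)] [[Hy' nRy'] _]; auto.
    apply nRy. apply (comp_inter_root i t y); auto; lia.
Qed.

End NonRoot.

(* For [x] outside [R] in [Fs t], the points of [X] below [x] are [R], the [t] blocks
   [Fs i \ R] with [i < t] (each of size [m k - r (S k)]), and those of [Fs t \ R]. *)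
Lemma position_in_component_spec x p : X x -> card_is (below X x) p ->
  exists t, t < N /\ Fs t x /\
    card_is (below (Fs t) x) (position_in_component (r (S k)) (m k) p).
Proof.
  intros Xx Hp. pose proof (two_le_n k). unfold position_in_component.
  destruct (classic (R x)) as [Rx|nRx].
  - exists 0. split; [lia|split; [apply root_sub_comp; auto; lia|]].
    pose proof (card_ext _ _ _ (below_root x Rx) Hp) as Hp'.
    assert (p < r (S k)).
    { apply (card_lt _ R _ _ x Hp' root_card); auto.
      - intros y [Hy yx]. eapply (root_initial 0); eauto. lia.
      - intros [_ h]. eapply w1_lt_irrefl; eauto. }
    replace (p <? r (S k)) with true by (symmetry; apply Nat.ltb_lt; auto). auto.
  - destruct (decomp_cover x Xx) as (t & ht & Hx). exists t. split; [|split]; auto.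
    destruct (card_sub_exists (below (setD (Fs t) R) x) (Fs t) (m k) (comp_card t ht))
      as [q Hq]; [intros y [[h _] _]; auto|].
    assert (Hqd : q < d).
    { apply (card_lt _ _ _ _ x Hq (comp_diff_card t ht)).
      - intros y [h _]; auto.
      - split; auto.
      - intros [_ h]. eapply w1_lt_irrefl; eauto. }
    pose proof (card_unique _ _ _ (below_decomp_card t x q ht Hx nRx Hq) Hp).
    replace (p <? r (S k)) with false by (symmetry; apply Nat.ltb_ge; lia).
    replace ((p - r (S k)) mod d) with q; [apply below_comp_card; auto|].
    apply (Nat.mod_unique _ _ t); [lia|nia].
Qed.

End Decomposition.

Lemma capture_indexed (U : W -> Prop) (s : W -> W -> Prop) k :
  ~ countable U -> (forall u, U u -> finite (s u)) ->
  (forall u v, U u -> U v -> set_eq (s u) (s v) -> u = v) ->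
  exists u v l F Fs R phi,
    U u /\ U v /\ u <> v /\ k < S l /\ level F (S l) /\ decomp l F Fs R /\
    subset (s u) (Fs 0) /\ subset (s v) (Fs 1) /\ (exists x, s u x /\ ~ R x) /\
    incr_bij lt (Fs 0) (Fs 1) phi /\ (forall y, s v y <-> exists x, s u x /\ phi x = y).
Proof.
  intros HU Hfin Hinj.
  set (family := fun a => exists u, U u /\ a = s u).
  assert (Hfam : forall a, family a -> finite a) by (intros a (u & Uu & ->); auto).
  assert (Hunc : uncountable_family family).
  { intros [f Hf]. apply HU. exists (fun u => f (s u)). intros u v Uu Uv E.
    apply Hinj; auto. apply Hf; unfold family; eauto. }
  destruct (H2c family Hfam Hunc k)
    as (a & b & l & F & (u & Uu & ->) & (v & Uv & ->) & Nab & Hkl & HF & Hcap).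
  destruct Hcap as (l' & -> & Fs & R & D & Hp & Hi).
  destruct (Hi 0 ltac:(lia)) as (S0 & Hne & _).
  destruct (Hi 1 ltac:(lia)) as (S1 & _ & phi & Hb & Himg).
  simpl in *. exists u, v, l', F, Fs, R, phi.
  refine (conj Uu (conj Uv (conj _ (conj Hkl (conj HF (conj D
            (conj S0 (conj S1 (conj Hne (conj Hb Himg)))))))))).
  intros ->. apply Nab. intro; tauto.
Qed.

(* Axiom (1) of a scheme gives no control on ranks; capturing does. *)
Lemma pair_in_level x y k : exists l H, k < l /\ level H l /\ H x /\ H y.
Proof.
  assert (Hfin : forall u, u <> x /\ u <> y -> finite (trip x y u)).
  { intros u _. exists [x; y; u]. intro z. unfold trip; simpl. intuition. }
  assert (Hinj : forall u v, u <> x /\ u <> y -> v <> x /\ v <> y ->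
                   set_eq (trip x y u) (trip x y v) -> u = v).
  { intros u v [ux uy] _ E.
    destruct (proj1 (E u) (or_intror (or_intror eq_refl))) as [h|[h|h]]; congruence. }
  destruct (capture_indexed _ _ k (uncountable_avoid2 lt Hom x y) Hfin Hinj)
    as (u & v & l & F & Fs & R & phi & _ & _ & _ & Hkl & HF & D & Hsub & _).
  pose proof (two_le_n l).
  exists (S l), F. split; [|split; [|split]]; auto;
    apply (comp_sub l F Fs R D 0); try lia; apply Hsub; unfold trip; auto.
Qed.

Lemma point_in_level x j : exists H, level H j /\ H x.
Proof.
  destruct (pair_in_level x x j) as (l & H & Hl & HH & Hx & _).
  destruct (level_descend l H x j HH Hx ltac:(lia)) as (H' & ? & ? & _). eauto.
Qed.

Lemma pair_lift E j a b l : level E j -> E a -> E b -> j <= l ->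
  exists H, level H l /\ H a /\ H b.
Proof.
  intros HE Ea Eb Hjl.
  assert (Hle : forall a b, E a -> E b -> le_w1 lt a b -> exists H, level H l /\ H a /\ H b).
  { clear a b Ea Eb. intros a b Ea Eb ab.
    destruct (point_in_level b l) as (H & HH & Hb).
    destruct (level_descend l H b j HH Hb Hjl) as (H' & HH' & Hb' & Sub).
    exists H. split; [|split]; auto. apply Sub. apply (level_lower_closed E H' j a b); auto. }
  destruct (w1_lt_total lt Hom a b) as [h|[<-|h]].
  - apply Hle; auto. left; auto.
  - apply Hle; auto. right; auto.
  - destruct (Hle b a Eb Ea (or_introl h)) as (H & HH & Hb & Ha). eauto.
Qed.

Lemma alpha_k_level H j x : level H j -> H x ->
  forall z, alpha_k lt Fam x j z <-> H z /\ le_w1 lt z x.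
Proof.
  intros HH Hx z. split.
  - intros [zx (j' & Hj' & E & HE & Ez & Ex)]. split; [|exact zx].
    destruct (level_descend j H x j' HH Hx Hj') as (H' & HH' & Hx' & Sub).
    apply Sub. apply (level_lower_closed E H' j' z x); auto.
  - intros [Hz zx]. split; auto. exists j. split; auto. exists H; auto.
Qed.

Definition falpha (a : W) (l : nat) : nat := cardf (alpha_k lt Fam a l).

Lemma falpha_spec a l : card_is (alpha_k lt Fam a l) (falpha a l).
Proof.
  destruct (point_in_level a l) as (H & HH & Ha).
  destruct (card_sub_exists (alpha_k lt Fam a l) H (m l) (level_card H l HH)) as [c Hc].
  { intros z Hz. apply (alpha_k_level H l a HH Ha z) in Hz. apply Hz. }
  unfold falpha. rewrite (cardf_spec _ c Hc). exact Hc.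
Qed.

Lemma BF_iff g : B_F lt Fam g <-> exists a, g = falpha a.
Proof.
  split.
  - intros [a Ha]. exists a. apply functional_extensionality. intro l.
    symmetry. apply cardf_spec. auto.
  - intros [a ->]. exists a. intro l. apply falpha_spec.
Qed.

Lemma falpha_below H j x p : level H j -> H x -> card_is (below H x) p -> falpha x j = S p.
Proof.
  intros HH Hx Hp. apply cardf_spec. rewrite <- Nat.add_1_r.
  eapply card_ext; [|apply card_union; [exact Hp|apply (card_single x)|]].
  - intro z. rewrite (alpha_k_level H j x HH Hx z). unfold below, le_w1. split.
    + intros [[Hz h]| ->]; auto.
    + intros [Hz [h| ->]]; auto.
  - intros z [_ h] ->. eapply w1_lt_irrefl; eauto.
Qed.

Lemma falpha_le_m a j : falpha a j <= m j.
Proof.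
  destruct (point_in_level a j) as (H & HH & Ha).
  apply (card_le _ _ _ _ (falpha_spec a j) (level_card H j HH)).
  intros z Hz. apply (alpha_k_level H j a HH Ha z) in Hz. apply Hz.
Qed.

Lemma falpha_max H j g : level H j -> H g -> (forall z, H z -> le_w1 lt z g) ->
  falpha g j = m j.
Proof.
  intros HH Hg Hmax. apply (card_unique _ _ _ (falpha_spec g j)).
  eapply card_ext; [|apply (level_card H j HH)].
  intro z. rewrite (alpha_k_level H j g HH Hg z). split; auto. tauto.
Qed.

Lemma falpha_mono F K a b l : level F K -> F a -> F b -> le_w1 lt a b -> K <= l ->
  falpha a l <= falpha b l.
Proof.
  intros HF Fa Fb ab Kl.
  destruct (pair_lift F K a b l HF Fa Fb Kl) as (H & HH & Ha & Hb).
  apply (card_le _ _ _ _ (falpha_spec a l) (falpha_spec b l)).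
  intros z Hz. apply (alpha_k_level H l a HH Ha z) in Hz.
  apply (alpha_k_level H l b HH Hb z). split; [apply Hz|].
  eapply w1_le_trans; eauto. apply Hz.
Qed.

Lemma falpha_strict F c a b : level F c -> F a -> F b -> lt a b ->
  falpha a c < falpha b c.
Proof.
  intros HF Fa Fb ab.
  apply (card_lt _ _ _ _ b (falpha_spec a c) (falpha_spec b c)).
  - intros z Hz. apply (alpha_k_level F c a HF Fa z) in Hz.
    apply (alpha_k_level F c b HF Fb z). split; [apply Hz|].
    left. eapply w1_le_lt_trans; eauto. apply Hz.
  - apply (alpha_k_level F c b HF Fb b). split; auto. right; auto.
  - intro Hz. apply (alpha_k_level F c a HF Fa b) in Hz.
    destruct Hz as [_ Hz]. eapply w1_le_not_lt; eauto.
Qed.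

Lemma falpha_le_w1 a b : fun_le (falpha a) (falpha b) -> le_w1 lt a b.
Proof.
  intro H. apply (w1_not_lt_le lt Hom). intro ba.
  destruct (pair_in_level b a 0) as (l & F & _ & HF & Fb & Fa).
  pose proof (falpha_strict F l b a HF Fb Fa ba). specialize (H l). lia.
Qed.

Lemma falpha_inj a b : falpha a = falpha b -> a = b.
Proof.
  intro E. apply (w1_le_antisym lt Hom); apply falpha_le_w1; intro k; rewrite E; auto.
Qed.

(* Below the rank of [F], the maximum of [F] reaches the bound [m j] of [falpha_le_m]. *)
Lemma falpha_le_max F l g c : level F l -> F g -> (forall z, F z -> le_w1 lt z g) -> F c ->
  fun_le (falpha c) (falpha g).
Proof.
  intros HF Fg Hmax Fc j. destruct (le_lt_dec l j) as [h|h].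
  - apply (falpha_mono F l); auto.
  - destruct (level_descend l F g j HF Fg ltac:(lia)) as (H & HH & Hg & Sub).
    rewrite (falpha_max H j g HH Hg); [apply falpha_le_m|]. auto.
Qed.

Lemma falpha_directed a b :
  exists g, fun_le (falpha a) (falpha g) /\ fun_le (falpha b) (falpha g) /\ le_w1 lt b g.
Proof.
  destruct (pair_in_level a b 0) as (l & F & _ & HF & Fa & Fb).
  destruct (level_card F l HF) as (L & _ & _ & EL).
  destruct (list_has_max lt Hom L a (proj1 (EL a) Fa)) as (g & Hg%EL & HmaxL).
  assert (Hmax : forall y, F y -> le_w1 lt y g) by (intros; apply HmaxL, EL; auto).
  exists g. split; [|split]; [apply (falpha_le_max F l)..|]; auto.
Qed.

Lemma BF_directed_po : directed_po (B_F lt Fam) fun_le.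
Proof.
  split; [|split; [|split]].
  - intros x _ k; auto.
  - intros x y z _ _ _ H1 H2 k. specialize (H1 k); specialize (H2 k). lia.
  - intros x y _ _ H1 H2. apply functional_extensionality. intro k.
    specialize (H1 k); specialize (H2 k). lia.
  - intros x y [a ->]%BF_iff [b ->]%BF_iff.
    destruct (falpha_directed a b) as (g & H1 & H2 & _).
    exists (falpha g). split; [apply BF_iff|]; eauto.
Qed.

Lemma falpha_determined_by_position k : forall X Y x y p,
  level X k -> level Y k -> X x -> Y y ->
  card_is (below X x) p -> card_is (below Y y) p ->
  forall j, j <= k -> falpha x j = falpha y j.
Proof.
  induction k as [|k IH]; intros X Y x y p HX HY Xx Yy Hpx Hpy j hj.
  - assert (j = 0) as -> by lia.
    rewrite (falpha_below X 0 x p), (falpha_below Y 0 y p); auto.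
  - destruct (Nat.eq_dec j (S k)) as [->|ne].
    { rewrite (falpha_below X _ x p), (falpha_below Y _ y p); auto. }
    destruct (level_decomp X k HX) as (Fs & R & D).
    destruct (level_decomp Y k HY) as (Gs & R' & D').
    destruct (position_in_component_spec k X Fs R D x p Xx Hpx) as (t & ht & Hxt & Ht).
    destruct (position_in_component_spec k Y Gs R' D' y p Yy Hpy) as (s & hs & Hys & Hs).
    apply (IH (Fs t) (Gs s) x y _ (comp_level k X Fs R D t ht) (comp_level k Y Gs R' D' s hs)
             Hxt Hys Ht Hs). lia.
Qed.

Lemma incr_bij_preserves_falpha k A B phi y : level A k -> level B k ->
  incr_bij lt A B phi -> A y -> forall j, j <= k -> falpha y j = falpha (phi y) j.
Proof.
  intros HA HB Hb Ay.
  destruct (card_sub_exists (below A y) A (m k) (level_card A k HA)) as [p Hp].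
  { intros z [h _]; auto. }
  apply (falpha_determined_by_position k A B y (phi y) p HA HB Ay (proj1 Hb y Ay) Hp).
  eapply card_ext; [|apply (card_injective_image _ phi p Hp)].
  - intro z. split.
    + intros (w & [Aw wy] & <-). split; apply Hb; auto.
    + intros [Bz zy]. destruct Hb as (H1 & H2 & H3). destruct (H3 z Bz) as (w & Aw & <-).
      exists w. repeat split; auto. eapply incr_bij_reflect_lt; eauto. split; eauto.
  - intros a b [Aa _] [Ab _]. eapply incr_bij_inj; eauto.
Qed.

Section Capture.
Variables (k : nat) (X : W -> Prop) (Fs : nat -> W -> Prop) (R : W -> Prop) (phi : W -> W).
Hypothesis D : decomp k X Fs R.
Hypothesis Hb : incr_bij lt (Fs 0) (Fs 1) phi.

Lemma capture_fixes_root x : R x -> phi x = x.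
Proof.
  pose proof (two_le_n k).
  induction (w1_lt_wf lt Hom x) as [x _ IH]. intro Rx.
  assert (F0x : Fs 0 x) by (apply (root_sub_comp k X Fs R D 0); auto; lia).
  assert (F1x : Fs 1 x) by (apply (root_sub_comp k X Fs R D 1); auto; lia).
  destruct (w1_lt_total lt Hom (phi x) x) as [h|[h|h]]; auto; exfalso.
  - assert (Rp : R (phi x)).
    { apply (root_initial k X Fs R D 1 (phi x) x); auto. apply Hb; auto. }
    assert (F0p : Fs 0 (phi x)) by (apply (root_sub_comp k X Fs R D 0); auto; lia).
    rewrite (incr_bij_inj lt Hom _ _ _ Hb _ _ F0p F0x (IH (phi x) h Rp)) in h.
    exact (w1_lt_irrefl lt Hom _ h).
  - destruct Hb as (_ & _ & H3). destruct (H3 x F1x) as (y & F0y & Ey).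
    assert (yx : lt y x) by (apply (incr_bij_reflect_lt lt Hom _ _ phi Hb); auto; congruence).
    assert (Ry : R y) by (apply (root_initial k X Fs R D 0 y x); auto; lia).
    rewrite (IH y yx Ry) in Ey. subst. exact (w1_lt_irrefl lt Hom _ yx).
Qed.

Lemma capture_moves_up x : Fs 0 x -> ~ R x -> ~ R (phi x) /\ lt x (phi x).
Proof.
  intros F0x nRx. pose proof (two_le_n k).
  assert (nR : ~ R (phi x)).
  { intro Rp. assert (F0p : Fs 0 (phi x)) by (apply (root_sub_comp k X Fs R D 0); auto; lia).
    rewrite (incr_bij_inj lt Hom _ _ _ Hb _ _ F0p F0x (capture_fixes_root _ Rp)) in Rp. auto. }
  split; auto. apply (comp_diff_increasing k X Fs R D 0 1); try split; auto. apply Hb; auto.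
Qed.

Lemma capture_falpha_le x : level X (S k) -> Fs 0 x -> fun_le (falpha x) (falpha (phi x)).
Proof.
  intros HX F0x j. pose proof (two_le_n k).
  assert (Hge : le_w1 lt x (phi x)).
  { destruct (classic (R x)) as [Rx|nRx].
    - right. symmetry. apply capture_fixes_root; auto.
    - left. apply capture_moves_up; auto. }
  destruct (le_lt_dec j k) as [h|h].
  - rewrite (incr_bij_preserves_falpha k (Fs 0) (Fs 1) phi x
               (comp_level k X Fs R D 0 ltac:(lia)) (comp_level k X Fs R D 1 ltac:(lia))
               Hb F0x j h).
    auto.
  - apply (falpha_mono X (S k)); auto.
    + apply (comp_sub k X Fs R D 0); auto; lia.
    + apply (comp_sub k X Fs R D 1); [lia|apply Hb; auto].
Qed.

Lemma captured_sorted_triple v yv xv w yw xw :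
  lt v yv -> lt yv xv -> lt w yw -> lt yw xw ->
  subset (trip v yv xv) (Fs 0) -> (exists z, trip v yv xv z /\ ~ R z) ->
  (forall y, trip w yw xw y <-> exists x, trip v yv xv x /\ phi x = y) ->
  v <> w -> phi yv = yw /\ lt xv w.
Proof.
  intros l1 l2 m1 m2 Hs Hne Himg vw. pose proof (two_le_n k).
  destruct (incr_bij_sorted_triple lt Hom _ _ phi v yv xv w yw xw Hb Hs Himg l1 l2 m1 m2)
    as [Ev Eyv].
  split; auto.
  assert (Fv : Fs 0 v) by (apply Hs; left; auto).
  assert (nRxv : ~ R xv).
  { apply (max_not_in_root k X Fs R D (trip v yv xv)); auto.
    - right; right; auto.
    - intro; apply trip_max; auto. }
  assert (nRv : ~ R v).
  { intro Rv. apply vw. rewrite <- Ev. symmetry. apply capture_fixes_root; auto. }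
  destruct (capture_moves_up v Fv nRv) as [nRw _]. rewrite Ev in nRw.
  apply (comp_diff_increasing k X Fs R D 0 1); try lia; split; auto.
  - apply Hs; right; right; auto.
  - rewrite <- Ev. apply Hb; auto.
Qed.

End Capture.

Lemma uncountable_has_infinite_downset (A : W -> Prop) : ~ countable A ->
  exists g, A g /\ ~ finite (fun a => A a /\ fun_le (falpha a) (falpha g)).
Proof.
  intro HA. apply NNPP. intro Hn.
  set (down := fun g a => A a /\ fun_le (falpha a) (falpha g)).
  assert (Hfin : forall g, A g -> finite (down g)).
  { intros g Ag. apply NNPP. intro h. apply Hn. exists g. auto. }
  assert (Hrefl : forall g, A g -> down g g) by (intros g Ag; split; [auto|intro; auto]).
  assert (Hmax : forall g a, down g a -> le_w1 lt a g).
  { intros g a [_ h]; apply falpha_le_w1; auto. }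
  assert (Hinj : forall u v, A u -> A v -> set_eq (down u) (down v) -> u = v).
  { intros u v Au Av E. apply (w1_le_antisym lt Hom).
    - apply (Hmax v u), E, Hrefl; auto.
    - apply (Hmax u v), E, Hrefl; auto. }
  destruct (capture_indexed A down 0 HA Hfin Hinj)
    as (g & h & l & F & Fs & R & phi & Ag & Ah & _ & _ & HF & D & S0 & S1 & Hne & Hb & Himg).
  pose proof (two_le_n l).
  assert (Fg : Fs 0 g) by (apply S0, Hrefl; auto).
  assert (Eh : phi g = h).
  { apply (incr_bij_max lt Hom _ _ phi Hb (down g) (down h) S0 Himg); auto. }
  assert (nRg : ~ R g) by (apply (max_not_in_root l F Fs R D (down g)); auto).
  apply nRg. apply (comp_inter_root l F Fs R D 0 1 g); auto; try lia.
  apply S1. split; auto. rewrite <- Eh. apply (capture_falpha_le l F Fs R phi D Hb); auto.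
Qed.

Lemma not_tukey_le_fin : ~ tukey_le (finite (W:=W)) (subset (W:=W)) (B_F lt Fam) fun_le.
Proof.
  intros [phi [Hmap Hcof]].
  assert (Hx : forall x, exists a, forall d, B_F lt Fam d -> fun_le (falpha a) d -> phi d x).
  { intro x.
    assert (Fx : finite (fun y => y = x)) by (exists [x]; intro y; simpl; intuition).
    destruct (tukey_map_eventually_above _ _ _ _ phi Hcof _ Fx)
      as (d0 & [a ->]%BF_iff & Hd).
    exists a. intros d Bd h. exact (Hd d Bd h x eq_refl). }
  destruct (choice _ Hx) as [ax Hax].
  assert (HB : forall a, B_F lt Fam (falpha a)) by (intro a; apply BF_iff; eauto).
  destruct (choice _ (fun a => Hmap (falpha a) (HB a))) as [L HL].
  set (A := fun a => exists x, ax x = a).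
  assert (HA : ~ countable A).
  { apply (range_uncountable lt Hom ax L). intro x. apply HL, Hax; auto. intro; auto. }
  destruct (uncountable_has_infinite_downset A HA) as (g & _ & Hinf).
  apply Hinf. apply (finite_sub _ (fun a => In a (map ax (L g)))).
  - exists (map ax (L g)). intro; tauto.
  - intros a [[x <-] Hle]. apply in_map, HL, Hax; auto.
Qed.

Definition countably_bounded (A : W -> Prop) : Prop :=
  forall C, countable C -> subset C A ->
    exists g, forall w, C w -> fun_le (falpha w) (falpha g).

Lemma countably_bounded_step (A : W -> Prop) : countably_bounded A ->
  forall w, exists y, lt w y /\ forall a, A a -> le_w1 lt a w -> fun_le (falpha a) (falpha y).
Proof.
  intros Hbd w.
  destruct (Hbd (fun a => A a /\ le_w1 lt a w)) as [g0 Hg0].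
  { apply (countable_sub _ _ (countable_seg lt Hom w)). intros x [_ h]; auto. }
  { intros x [h _]; auto. }
  destruct (exists_gt lt Hom w) as [w' Hw'].
  destruct (falpha_directed g0 w') as (y & Hy & _ & Hwy).
  exists y. split; [eapply w1_lt_le_trans; eauto|].
  intros a Aa aw j. specialize (Hg0 a (conj Aa aw) j). specialize (Hy j). lia.
Qed.

Lemma not_countably_bounded (A : W -> Prop) : ~ countable A -> ~ countably_bounded A.
Proof.
  intros HA Hbd.
  destruct (choice _ (countably_bounded_step A Hbd)) as [Y HY].
  destruct (choice _ (fun w => uncountable_unbounded lt Hom A HA (Y w))) as [Z HZ].
  destruct (uncountable_pigeonhole A
              (fun c w => exists H, level H c /\ H (Y w) /\ H (Z w)) HA) as [c0 HU].
  { intros w _. destruct (pair_in_level (Y w) (Z w) 0) as (c & H & _ & HH & Hy & Hz). eauto. }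
  set (U := fun w => A w /\ exists H, level H c0 /\ H (Y w) /\ H (Z w)).
  assert (Hsort : forall w, lt w (Y w) /\ lt (Y w) (Z w)).
  { intro w. split; [apply HY|apply HZ]. }
  assert (Hfin : forall w, U w -> finite (trip w (Y w) (Z w))).
  { intros w _. exists [w; Y w; Z w]. intro z. unfold trip; simpl. intuition. }
  assert (Hinj : forall v w, U v -> U w ->
                   set_eq (trip v (Y v) (Z v)) (trip w (Y w) (Z w)) -> v = w).
  { intros v w _ _ E. destruct (Hsort v), (Hsort w).
    apply (w1_le_antisym lt Hom).
    - apply (trip_min lt Hom v (Y v) (Z v)); auto. apply E. left; auto.
    - apply (trip_min lt Hom w (Y w) (Z w)); auto. apply E. left; auto. }
  destruct (capture_indexed U _ c0 HU Hfin Hinj)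
    as (v & w & l & F & Fs & R & phi & Uv & Uw & vw & Hl & HF & D & S0 & _ & Hne & Hb & Himg).
  destruct (Hsort v) as [Hv1 Hv2], (Hsort w) as [Hw1 Hw2].
  destruct (captured_sorted_triple l F Fs R phi D Hb v (Y v) (Z v) w (Y w) (Z w))
    as [Ey Hzw]; auto.
  destruct Uv as [Av (G & HG & Gy & Gz)].
  pose proof (two_le_n l).
  assert (Hinv : falpha (Y v) c0 = falpha (Y w) c0).
  { rewrite <- Ey. apply (incr_bij_preserves_falpha l (Fs 0) (Fs 1) phi (Y v));
      try apply (comp_level l F Fs R D); auto; try lia.
    apply S0. right; left; auto. }
  pose proof (falpha_strict G c0 (Y v) (Z v) HG Gy Gz Hv2).
  pose proof (proj2 (HY w) (Z v) (proj1 (HZ v)) (or_introl Hzw) c0).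
  lia.
Qed.

Lemma not_tukey_le_prod :
  ~ tukey_le (B_F lt Fam) fun_le (fun _ : nat * W => True) (le_prod lt).
Proof.
  intros [phi [Hmap Hcof]].
  assert (Hev : forall a, exists p : nat * W,
             forall d, le_prod lt p d -> fun_le (falpha a) (phi d)).
  { intro a.
    destruct (tukey_map_eventually_above _ _ _ _ phi Hcof (falpha a)) as (p & _ & Hp).
    - apply BF_iff; eauto.
    - exists p. intro d. apply Hp. exact I. }
  destruct (choice _ Hev) as [p Hp].
  destruct (uncountable_pigeonhole (fun _ => True) (fun k w => fst (p w) = k)
              (omega1_uncountable lt Hom)) as [k0 Hk0]; [eauto|].
  apply (not_countably_bounded _ Hk0).
  intros C HC HCA. destruct (countable_bounded lt Hom C (fun w => snd (p w)) HC) as [d Hd].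
  destruct (proj1 (BF_iff _) (Hmap (k0, d) I)) as [g Hg].
  exists g. intros w Cw. rewrite <- Hg. apply Hp. split; simpl; auto.
  destruct (HCA w Cw) as [_ ->]. auto.
Qed.

End Scheme.

Theorem mainTheorem11 (W : Type) (lt : W -> W -> Prop)
  (m n r : nat -> nat) (Fam : (W -> Prop) -> Prop) :
  is_omega1 lt ->
  is_type m n r ->
  construction_scheme lt Fam m n r ->
  two_capturing lt Fam n r ->
  let B := B_F lt Fam in
  directed_po B fun_le /\
  (exists phi : W -> (nat -> nat),
     (forall a, B (phi a)) /\ (forall a b, phi a = phi b -> a = b) /\
     (forall g, B g -> exists a, phi a = g)) /\
  ~ tukey_equiv B fun_le (fun _ : unit => True) one_le /\
  ~ tukey_equiv B fun_le (fun _ : nat => True) le /\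
  ~ tukey_equiv B fun_le (fun _ : W => True) (le_w1 lt) /\
  ~ tukey_equiv B fun_le (fun _ : nat * W => True) (le_prod lt) /\
  ~ tukey_equiv B fun_le (finite (W:=W)) (subset (W:=W)).
Proof.
  intros Hom Hty Hcs H2c B.
  destruct (omega1_inhabited lt Hom) as [w0].
  assert (Hprod : forall U (E : U -> Prop) leE,
             tukey_le E leE (fun _ : nat * W => True) (le_prod lt) ->
             ~ tukey_equiv B fun_le E leE).
  { intros U E leE HE [H _]. eapply not_tukey_le_prod; eauto.
    eapply tukey_le_trans; eassumption. }
  pose proof (tukey_le_nat_prod lt w0) as Hnat.
  split; [eapply BF_directed_po; eassumption|].
  split.
  { exists (falpha lt Fam). split; [|split].
    - intro a. apply (BF_iff lt Fam m n r Hom Hty Hcs H2c). eauto.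
    - eapply falpha_inj; eassumption.
    - intros g [a ->]%(BF_iff lt Fam m n r Hom Hty Hcs H2c). eauto. }
  split; [apply Hprod, (tukey_le_trans _ _ _ _ _ _ tukey_le_unit_nat Hnat)|].
  split; [apply Hprod, Hnat|].
  split; [apply Hprod, tukey_le_w1_prod, Hom|].
  split; [intros [H _]; eapply not_tukey_le_prod; eassumption|].
  intros [_ H]. eapply not_tukey_le_fin; eassumption.
Qed.
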